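(* Consider the algorithm SR-DFF run with input $m$ on a stream consistent with a representation $\mathcal{G}$ of size $m$ with at most $k$ exceptions. For any two valid non-corrupted rules $C[x]$ and $C[x']$ that exist at the same time in the rule list $L$, $G(x)\neq G(x')$.
   Context: Setting. $\mathcal{X}$ is a domain, $\mathcal{Y}$ a finite label set, $\Phi$ a set of binary features on $\mathcal{X}$ closed under negation. A representation of size $m$ is a cover $\mathcal{G}=\{G_1,\dots,G_m\}$ of $\mathcal{X}$ by components with labels $\ell(G)$; each $x$ has a fixed component $G(x)\ni x$; $c^*(x)=\ell(G(x))$; for components $G_i,G_j$ with different labels there is $\phi(G_i,G_j)\in\Phi$ true on all of $G_i$ and false on all of $G_j$, with $\phi(G_j,G_i)=\neg\phi(G_i,G_j)$. Protocol: the learner first gets $x_0$ with label $y_0$; then each example $x_t$ arrives, the learner predicts a label with an explanation example previously seen with that label; on a mistake the teacher gives $y_t=c^*(x_t)$ and $\phi(G(x_t),G(\hat x_t))$, $\hat x_t$ the explanation. An exception is an example on which the feedback is inconsistent with the representation/protocol; a stream is consistent with $\mathcal{G}$ with at most $k$ exceptions if at most $k$ examples are exceptions. Non-exception examples are called valid. SR-DFF (input $m$): receives $(x_0,y_0)$; maintains a list $L$ of rules, each indexed by a representative example $x$, with a conjunction $C[x]$ of features and a label $\texttt{label}[x]$. On $x_t$: if some $C[\hat x]\in L$ is satisfied by $x_t$, predict $\texttt{label}[\hat x]$ with explanation $\hat x$; if incorrect, receive $y_t,\phi$, set $C[\hat x]:=C[\hat x]\wedge\neg\phi$, and delete the rule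 if $C[\hat x]$ has at least $m$ features. Otherwise predict $y_0$ with explanation $x_0$; if incorrect, receive $y_t,\phi$ and add a new rule with empty conjunction $C[x_t]$ and $\texttt{label}[x_t]=y_t$. A rule $C[x]$ is valid if $x$ is a valid example. A rule is corrupted if at least one of the features in its conjunction was added during a refinement step triggered by an example $x_t$ that was an exception. *)

From mathcomp Require Import all_boot.
Set Implicit Arguments.
Unset Strict Implicit.
Unset Printing Implicit Defensive.

(* Components are indexed by 'I_m; component i is the G_i (as a  *)
(* boolean predicate on X), lab i its label l(G_i), Gx z the fixed    *)
(* component G(z) of z, and sep i j the separating feature            *)
(* phi(G_i, G_j).                                                     *)
Record representation (X : Type) (Y : Type) (m : nat) := Repr {
  component : 'I_m -> X -> bool;
  lab  : 'I_m -> Y;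
  Gx   : X -> 'I_m;
  sep  : 'I_m -> 'I_m -> X -> bool }.

(* Phi is the set of binary features (closed under negation, assumed   *)
(* separately in the theorem).                                        *)
Definition is_repr (X : Type) (Y : eqType) (m : nat)
    (Phi : (X -> bool) -> Prop) (R : representation X Y m) : Prop :=
  [/\ forall z, component R (Gx R z) z,
      forall i j, lab R i != lab R j -> Phi (sep R i j),
      forall i j, lab R i != lab R j -> forall z, component R i z -> sep R i j z,
      forall i j, lab R i != lab R j -> forall z, component R j z -> ~~ sep R i j z
    & forall i j, lab R i != lab R j -> forall z, sep R j i z = ~~ sep R i j z].

Definition cstar (X : Type) (Y : Type) (m : nat) (R : representation X Y m) (z : X) : Y :=
  lab R (Gx R z).

(* representative example x_s ("rep").  The conjunction is a list of   *)
(* features, each tagged (ghost information) with the time step whose  *)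
(* refinement added it.                                                *)
Record rule (X : Type) (Y : Type) := Rule {
  rep  : nat;
  conj : seq (nat * (X -> bool));
  rlab : Y }.

Definition sat (X Y : Type) (r : rule X Y) (z : X) : bool :=
  all (fun p => p.2 z) (conj r).

Definition refine (X Y : Type) (t : nat) (f : X -> bool) (r : rule X Y) : rule X Y :=
  Rule (rep r) (rcons (conj r) (t, fun z => ~~ f z)) (rlab r).

(* One step of SR-DFF (input m) on example x t, t >= 1, with teacher     *)
(* feedback y t (label) and phi t (feature), used only on mistakes.    *)
(* sr_step ... t L L' e p : rule list L becomes L'; the explanation is  *)
(* x (e) and the predicted label is p.  The choice among satisfied     *)
(* rules is left nondeterministic.                                     *)
Inductive sr_step (X : Type) (Y : eqType) (m : nat) (x : nat -> X) (y : nat -> Y)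
    (phi : nat -> X -> bool) (t : nat) :
    seq (rule X Y) -> seq (rule X Y) -> nat -> Y -> Prop :=
| StepHitCorrect L1 r L2 :
    sat r (x t) -> rlab r = y t ->
    sr_step m x y phi t (L1 ++ r :: L2) (L1 ++ r :: L2) (rep r) (rlab r)
| StepHitRefine L1 r L2 :
    sat r (x t) -> rlab r <> y t ->
    size (conj (refine t (phi t) r)) < m ->
    sr_step m x y phi t (L1 ++ r :: L2) (L1 ++ refine t (phi t) r :: L2)
            (rep r) (rlab r)
| StepHitDelete L1 r L2 :
    sat r (x t) -> rlab r <> y t ->
    m <= size (conj (refine t (phi t) r)) ->
    sr_step m x y phi t (L1 ++ r :: L2) (L1 ++ L2) (rep r) (rlab r)
| StepMissCorrect L :
    all (fun r => ~~ sat r (x t)) L -> y 0 = y t ->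
    sr_step m x y phi t L L 0 (y 0)
| StepMissAdd L :
    all (fun r => ~~ sat r (x t)) L -> y 0 <> y t ->
    sr_step m x y phi t L (rcons L (Rule t [::] (y t))) 0 (y 0).

(* A run: L t is the rule list after processing x t (L 0 = [::] after   *)
(* receiving (x 0, y 0)); e t is the time index of the explanation and  *)
(* p t the predicted label at step t >= 1.                              *)
Definition sr_run (X : Type) (Y : eqType) (m : nat) (x : nat -> X) (y : nat -> Y)
    (phi : nat -> X -> bool) (L : nat -> seq (rule X Y)) (e : nat -> nat)
    (p : nat -> Y) : Prop :=
  L 0 = [::] /\
  forall t, sr_step m x y phi t.+1 (L t) (L t.+1) (e t.+1) (p t.+1).

Definition exception (X : Type) (Y : eqType) (m : nat) (R : representation X Y m)
    (x : nat -> X) (y : nat -> Y) (phi : nat -> X -> bool)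
    (e : nat -> nat) (p : nat -> Y) (t : nat) : Prop :=
  if t is 0 then y 0 <> cstar R (x 0)
  else y t <> cstar R (x t) \/
       (p t <> y t /\ phi t <> sep R (Gx R (x t)) (Gx R (x (e t)))).

Definition at_most_exceptions (X : Type) (Y : eqType) (m : nat) (R : representation X Y m)
    (x : nat -> X) (y : nat -> Y) (phi : nat -> X -> bool)
    (e : nat -> nat) (p : nat -> Y) (k : nat) : Prop :=
  exists s : seq nat, size s <= k /\
    forall t, exception R x y phi e p t -> t \in s.

Definition valid_rule (X : Type) (Y : eqType) (m : nat) (R : representation X Y m)
    (x : nat -> X) (y : nat -> Y) (phi : nat -> X -> bool)
    (e : nat -> nat) (p : nat -> Y) (r : rule X Y) : Prop :=
  ~ exception R x y phi e p (rep r).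

Definition corrupted (X : Type) (Y : eqType) (m : nat) (R : representation X Y m)
    (x : nat -> X) (y : nat -> Y) (phi : nat -> X -> bool)
    (e : nat -> nat) (p : nat -> Y) (r : rule X Y) : Prop :=
  exists2 s, s \in map fst (conj r) & exception R x y phi e p s.

From mathcomp Require Import all_boot.
From Stdlib Require List Classical_Prop.

Set Implicit Arguments.
Unset Strict Implicit.
Unset Printing Implicit Defensive.

(* SR-DFF maintains two invariants.  The representative of every rule
   violates every earlier rule of the list (otherwise its example would have
   hit that rule instead of creating a new one).  And each feature of a rule
   C[x] is the negation of the teacher's feature phi_s received at a mistake s
   whose explanation was x.  So if r precedes r', some phi_s with s a tag of r
   holds at x(rep r').  If neither s nor rep r is an exception, the labels of
   G(x_s) and G(x(rep r)) differ and phi_s = phi(G(x_s), G(x(rep r))) is false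
   on all of G(x(rep r)); hence x(rep r') is not in G(x(rep r)), although it is
   in its own component G(x(rep r')). *)

Lemma pairwise_replace (T : Type) (r : rel T) (a b : T) (s1 s2 : seq T) :
  (forall c, r c a -> r c b) -> (forall c, r a c -> r b c) ->
  pairwise r (s1 ++ a :: s2) -> pairwise r (s1 ++ b :: s2).
Proof.
move=> rb_l rb_r; rewrite !pairwise_cat !pairwise_cons !allrel_consr.
case/and3P=> /andP[r1a r12] p1 /andP[ra2 p2].
by rewrite (sub_all rb_l r1a) r12 p1 p2 (sub_all rb_r ra2).
Qed.

Lemma pairwise_delete (T : Type) (r : rel T) (a : T) (s1 s2 : seq T) :
  pairwise r (s1 ++ a :: s2) -> pairwise r (s1 ++ s2).
Proof.
rewrite !pairwise_cat pairwise_cons allrel_consr.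
by case/and3P=> /andP[_ ->] -> /andP[_ ->].
Qed.

Lemma Forall_has_fst (A : eqType) (B : Type) (P : A * B -> Prop)
    (q : pred (A * B)) (s : seq (A * B)) :
  List.Forall P s -> has q s -> exists2 f, f.1 \in map fst s & P f /\ q f.
Proof.
elim=> [|f {}s Pf _ IH] //= /orP[qf|/IH[g gs Pg]].
  by exists f; rewrite ?inE ?eqxx.
by exists g; rewrite // inE gs orbT.
Qed.

Section Invariant.
Variables (X : Type) (Y : eqType) (m : nat) (x : nat -> X) (y : nat -> Y)
  (phi : nat -> X -> bool) (e : nat -> nat) (p : nat -> Y).

Definition excludes (a b : rule X Y) : bool := ~~ sat a (x (rep b)).

Definition refinement_feature (a : rule X Y) (f : nat * (X -> bool)) : Prop :=
  [/\ 0 < f.1, f.2 = (fun z => ~~ phi f.1 z), e f.1 = rep a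
    & p f.1 = rlab a /\ p f.1 <> y f.1].

Definition rule_inv (a : rule X Y) : Prop :=
  rlab a = y (rep a) /\ List.Forall (refinement_feature a) (conj a).

Definition list_inv (s : seq (rule X Y)) : Prop :=
  pairwise excludes s /\ List.Forall rule_inv s.

Lemma sat_refine t f (a : rule X Y) z : sat (refine t f a) z = ~~ f z && sat a z.
Proof. by rewrite /sat all_rcons. Qed.

Lemma sr_step_inv t s s' :
  0 < t -> sr_step m x y phi t s s' (e t) (p t) -> list_inv s -> list_inv s'.
Proof.
move=> t_gt0; move Ee: (e t) => ee; move Ep: (p t) => pp step.
case: step Ee Ep => [s1 a s2 _ _ _ _ //|s1 a s2 _ wrong _ e_t p_t|
  s1 a s2 _ _ _ _ _|s2 _ _ _ _ //|s2 no_hit _ _ _].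
- case=> excl /List.Forall_app[inv1 /List.Forall_cons_iff[[lab_a feats] inv2]].
  split.
    apply: pairwise_replace excl => [c|c]; first exact: id.
    by rewrite /excludes sat_refine negb_and => ->; rewrite orbT.
  apply/List.Forall_app; split=> //; apply/List.Forall_cons_iff; split=> //.
  split=> //=; rewrite -cats1; apply/List.Forall_app; split=> //.
  by constructor=> //; split; rewrite ?p_t.
- case=> excl /List.Forall_app[inv1 /List.Forall_cons_iff[_ inv2]].
  by split; [exact: pairwise_delete excl | apply/List.Forall_app].
- case=> excl inv; split; first by rewrite pairwise_rcons excl andbT.
  by rewrite -cats1; apply/List.Forall_app; split=> //; constructor.
Qed.

Lemma sr_run_inv L : sr_run m x y phi L e p -> forall t, list_inv (L t).
Proof.
case=> L0 step; elim=> [|t IH]; first by rewrite L0; split.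
exact: sr_step_inv (step t) IH.
Qed.

Variables (Phi : (X -> bool) -> Prop) (R : representation X Y m).
Hypothesis HR : is_repr Phi R.

Lemma label_of_nonexception t :
  ~ exception R x y phi e p t -> y t = cstar R (x t).
Proof.
move=> ok; case: (y t =P cstar R (x t)) => // neq; case: ok.
by case: t neq => [|t] neq; [|left].
Qed.

Lemma feature_of_nonexception t :
  0 < t -> ~ exception R x y phi e p t -> p t <> y t ->
  phi t = sep R (Gx R (x t)) (Gx R (x (e t))).
Proof.
case: t => // t _ ok mistake; apply: Classical_Prop.NNPP => neq.
by apply: ok; right.
Qed.

Lemma unsat_outside_component a z :
  rule_inv a -> valid_rule R x y phi e p a -> ~ corrupted R x y phi e p a ->
  ~~ sat a z -> ~~ component R (Gx R (x (rep a))) z.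
Proof.
case=> lab_a feats valid_a uncorrupted_a.
rewrite /sat -has_predC => /(Forall_has_fst feats).
case=> -[s f] /= s_tag [[/= s_gt0 -> e_s [p_s mistake]]] /=; rewrite negbK.
move=> phi_s_z; have ok_s : ~ exception R x y phi e p s.
  by move=> exc; apply: uncorrupted_a; exists s.
have lab_ne : lab R (Gx R (x s)) != lab R (Gx R (x (rep a))).
  apply/eqP => eq_lab; apply: mistake.
  by rewrite p_s lab_a (label_of_nonexception valid_a)
    (label_of_nonexception ok_s) /cstar eq_lab.
case: HR => _ _ _ sep_out _; apply/negP => z_in.
move: (sep_out _ _ lab_ne z z_in).
by rewrite -e_s -(feature_of_nonexception s_gt0 ok_s mistake) phi_s_z.
Qed.

End Invariant.

Theorem lemma2 (X : Type) (Y : finType) (Phi : (X -> bool) -> Prop)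
    (Phi_neg : forall f, Phi f -> Phi (fun z => ~~ f z))
    (m k : nat) (R : representation X Y m) (HR : is_repr Phi R)
    (x : nat -> X) (y : nat -> Y) (phi : nat -> X -> bool)
    (L : nat -> seq (rule X Y)) (e : nat -> nat) (p : nat -> Y)
    (Hrun : sr_run m x y phi L e p)
    (Hk : at_most_exceptions R x y phi e p k)
    (T : nat) (L1 L2 L3 : seq (rule X Y)) (r r' : rule X Y)
    (HL : L T = L1 ++ r :: L2 ++ r' :: L3)
    (Hv : valid_rule R x y phi e p r) (Hc : ~ corrupted R x y phi e p r)
    (Hv' : valid_rule R x y phi e p r') (Hc' : ~ corrupted R x y phi e p r') :
  component R (Gx R (x (rep r))) <> component R (Gx R (x (rep r'))).
Proof.
move=> same_component.
have [excl inv] := sr_run_inv Hrun T; rewrite HL in excl inv.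
have r_excl_r' : excludes x r r'.
  move: excl; rewrite pairwise_cat pairwise_cons all_cat /=.
  by case/and3P=> _ _ /andP[/andP[_ /andP[]]].
move/List.Forall_app: inv => [_ /List.Forall_cons_iff[inv_r _]].
have := unsat_outside_component HR inv_r Hv Hc r_excl_r'.
by case: HR => in_own _ _ _ _; rewrite same_component in_own.
Qed.
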